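(* Let $\mathbf{A}$ be the constraint matrix of the relaxed nonbinary LDPC decoding problem constructed in the context. Then every entry of $\mathbf{A}$ belongs to $\{0,1,-1\}$.
   Context: Fix $q\ge1$; identify $\mathbb{F}_{2^q}$ with $\{0,\dots,2^q-1\}$ via binary expansion $\alpha=\sum_{i=1}^q c_i2^{i-1}$. A nonbinary code has parity-check matrix $\mathbf{H}\in\mathbb{F}_{2^q}^{m\times n}$ whose $j$th row has $d_j\ge3$ nonzero entries, at positions $\sigma_1,\dots,\sigma_{d_j}$ with coefficients $h_{\sigma_1},\dots,h_{\sigma_{d_j}}$. Each row is decomposed into $d_j-2$ three-variable checks using $d_j-3$ auxiliary symbols $g_1,\dots,g_{d_j-3}$: the first check involves $(u_{\sigma_1},h_{\sigma_1}),(u_{\sigma_2},h_{\sigma_2}),(g_1,1)$; for $t=2,\dots,d_j-3$ a check involves $(g_{t-1},1),(u_{\sigma_{t+1}},h_{\sigma_{t+1}}),(g_t,1)$; the last check involves $(g_{d_j-3},1),(u_{\sigma_{d_j-1}},h_{\sigma_{d_j-1}}),(u_{\sigma_{d_j}},h_{\sigma_{d_j}})$ (if $d_j=3$ there is a single check on the three code symbols). Altogether there are $\Gamma_c=\sum_j(d_j-2)$ three-variable checks and $\Gamma_a=\sum_j(d_j-3)$ auxiliary symbols, so $n+\Gamma_a$ symbols. For check $\tau$ let $h_{\tau,1},h_{\tau,2},h_{\tau,3}$ be its coefficients and $\mathbf{Q}_\tau\in\{0,1\}^{3\times(n+\Gamma_a)}$ the matrix whose $k$th row has a single $1$ at the index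 of its $k$th symbol. Let $\mathbf{D}(2^q,h)$ be the $(2^q-1)\times(2^q-1)$ matrix with $D_{ij}=1$ iff $i=j\cdot h$ in $\mathbb{F}_{2^q}$, and $\mathbf{D}_\tau=\mathrm{diag}(\mathbf{D}(2^q,h_{\tau,1}),\mathbf{D}(2^q,h_{\tau,2}),\mathbf{D}(2^q,h_{\tau,3}))$. Let $\mathbf{B}\in\{0,1\}^{q\times(2^q-1)}$ have $B_{i\alpha}$ equal to the $i$th binary digit (weight $2^{i-1}$) of $\alpha$. For $\ell=1,\dots,2^q-1$ let $\boldsymbol\beta_\ell\in\{0,1\}^{2^q-1}$, $(\boldsymbol\beta_\ell)_\alpha=\big(\sum_{i=1}^qB_{i\ell}B_{i\alpha}\big)\bmod 2$. Let $\mathbf{P}=\begin{bmatrix}1&-1&-1\\-1&1&-1\\-1&-1&1\\1&1&1\end{bmatrix}$. Set $\hat{\mathbf{W}}_\tau=[\mathbf{P}\,\mathrm{diag}(\boldsymbol\beta_1^T,\boldsymbol\beta_1^T,\boldsymbol\beta_1^T)\mathbf{D}_\tau;\dots;\mathbf{P}\,\mathrm{diag}(\boldsymbol\beta_{2^q-1}^T,\boldsymbol\beta_{2^q-1}^T,\boldsymbol\beta_{2^q-1}^T)\mathbf{D}_\tau]$, $\mathbf{S}=\mathbf{I}_{n+\Gamma_a}\otimes\mathbf{1}_{2^q-1}^T$, and $\mathbf{A}=[\hat{\mathbf{W}}_1(\mathbf{Q}_1\otimes\mathbf{I}_{2^q-1});\dots;\hat{\mathbf{W}}_{\Gamma_c}(\mathbf{Q}_{\Gamma_c}\otimes\mathbf{I}_{2^q-1});\mathbf{S}]$,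 where semicolons denote vertical stacking. *)

From HB Require Import structures.
From mathcomp Require Import all_boot all_order all_algebra all_field.
Set Implicit Arguments. Unset Strict Implicit. Unset Printing Implicit Defensive.
Import Order.TTheory GRing.Theory Num.Theory.
Local Open Scope ring_scope.

(* An index i : 'I_(k * r) is read as
   the pair (i %/ r, i %% r) (block-major order), the usual convention for
   Kronecker products and vertical stacking of k blocks of height r.      *)

Lemma blk_lt (k r : nat) (i : 'I_(k * r)) : (i %/ r < k)%N.
Proof.
case: r i => [|r] i; first by case: i => i; rewrite muln0.
by rewrite ltn_divLR // mulnC.
Qed.

Lemma off_lt (k r : nat) (i : 'I_(k * r)) : (i %% r < r)%N.
Proof.
case: r i => [|r] i; first by case: i => i; rewrite muln0.
by rewrite ltn_pmod.
Qed.

Definition blk (k r : nat) (i : 'I_(k * r)) : 'I_k := Ordinal (blk_lt i).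
Definition off (k r : nat) (i : 'I_(k * r)) : 'I_r := Ordinal (off_lt i).

Definition kronmx (R : pzRingType) (m1 n1 m2 n2 : nat)
  (A : 'M[R]_(m1, n1)) (B : 'M[R]_(m2, n2)) : 'M[R]_(m1 * m2, n1 * n2) :=
  \matrix_(i, j) (A (blk i) (blk j) * B (off i) (off j)).

Definition stackmx (R : Type) (k r c : nat) (X : 'I_k -> 'M[R]_(r, c))
  : 'M[R]_(k * r, c) :=
  \matrix_(i, j) X (blk i) (off i) j.

Definition bdiagmx (R : pzRingType) (k a b : nat) (X : 'I_k -> 'M[R]_(a, b))
  : 'M[R]_(k * a, k * b) :=
  \matrix_(i, j) (if blk i == blk j then X (blk i) (off i) (off j) else 0).

(* The field F_(2^q) and its identification with {0, ..., 2^q - 1}.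
   Given an F_2-basis b_1..b_q of F (here b : 'I_q -> F), the integer
   alpha = sum_i c_i 2^(i-1) is identified with sum_i c_i b_i.          *)

(* i-th binary digit (weight 2^i, 0-indexed) of a natural number *)
Definition bitn (i a : nat) : bool := odd (a %/ 2 ^ i).

Definition fel (F : finFieldType) (q : nat) (b : 'I_q -> F) (a : nat) : F :=
  \sum_(i < q) (bitn i a)%:R * b i.

Definition fel_ord (F : finFieldType) (q : nat) (b : 'I_q -> F)
  (a : 'I_(2 ^ q)) : F := fel b a.

(* Nonzero elements 1..2^q-1 are indexed by 'I_(2^q - 1), index k <-> k+1. *)
Notation Nq q := (2 ^ q - 1)%N.

Definition Dmat (F : finFieldType) (q : nat) (b : 'I_q -> F) (h : F)
  : 'M[int]_(Nq q) :=
  \matrix_(i, j) ((fel b i.+1 == fel b j.+1 * h) : int).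

Definition Bmat (q : nat) : 'M[int]_(q, Nq q) :=
  \matrix_(i, a) (bitn i a.+1 : int).

(* beta_l, l = k+1 for k : 'I_(2^q - 1), as a column vector. *)
Definition betav (q : nat) (l : 'I_(Nq q)) : 'cV[int]_(Nq q) :=
  \col_a ((\sum_(i < q) Bmat q i l * Bmat q i a) %% 2)%Z.

Definition Pmat : 'M[int]_(4, 3 * 1) :=
  \matrix_(i < 4, j < 3 * 1)
    (if i == 3 :> nat then 1 else if i == j :> nat then 1 else -1).

Section Code.
Variables (F : finFieldType) (m n : nat) (H : 'M[F]_(m, n)).

Definition supp (j : 'I_m) : seq 'I_n := [seq k <- enum 'I_n | H j k != 0].
Definition deg (j : 'I_m) : nat := size (supp j).

Definition Gamma_c : nat := (\sum_(j < m) (deg j - 2))%N.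
Definition Gamma_a : nat := (\sum_(j < m) (deg j - 3))%N.

(* A symbol is a natural index: code symbols u_1..u_n are 0..n-1, and
   the auxiliary symbols g_1..g_{d_j - 3} of row j are
   n + off_j + 0, ..., n + off_j + (d_j - 4), off_j = sum_{j' < j} (d_j' - 3). *)
Definition aux_off (j : 'I_m) : nat := (\sum_(j' < m | j' < j) (deg j' - 3))%N.

(* sigma_k (1-indexed, as a symbol index) and its coefficient h_{sigma_k} *)
Definition sig (j : 'I_m) (k : nat) : nat :=
  nth 0%N [seq val s | s <- supp j] k.-1.
Definition hsig (j : 'I_m) (k : nat) : F :=
  nth 0 [seq H j s | s <- supp j] k.-1.

Definition gaux (j : 'I_m) (t : nat) : nat := (n + aux_off j + t.-1)%N.

(* a three-variable check: its three (symbol, coefficient) pairs *)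
Definition check3 := ((nat * F) * (nat * F) * (nat * F))%type.

Definition row_checks (j : 'I_m) : seq check3 :=
  let d := deg j in
  if d == 3 then
    [:: ((sig j 1, hsig j 1), (sig j 2, hsig j 2), (sig j 3, hsig j 3))]
  else
    ((sig j 1, hsig j 1), (sig j 2, hsig j 2), (gaux j 1, 1))
    :: [seq ((gaux j t.-1, 1), (sig j t.+1, hsig j t.+1), (gaux j t, 1))
         | t <- iota 2 (d - 4)]
    ++ [:: ((gaux j (d - 3), 1), (sig j d.-1, hsig j d.-1), (sig j d, hsig j d))].

Definition all_checks : seq check3 := flatten [seq row_checks j | j <- enum 'I_m].

Definition dflt_check : check3 := ((0%N, 0), (0%N, 0), (0%N, 0)).

Definition chk (tau : 'I_Gamma_c) : check3 := nth dflt_check all_checks tau.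

Definition chk_entry (tau : 'I_Gamma_c) (k : 'I_3) : nat * F :=
  let: (x1, x2, x3) := chk tau in
  if k == 0 :> nat then x1 else if k == 1 :> nat then x2 else x3.

Definition Nsym : nat := (n + Gamma_a)%N.

Definition Qmat (tau : 'I_Gamma_c) : 'M[int]_(3, Nsym) :=
  \matrix_(k, x) ((val x == (chk_entry tau k).1) : int).

Variables (q : nat) (b : 'I_q -> F).

Definition Dtau (tau : 'I_Gamma_c) : 'M[int]_(3 * Nq q) :=
  bdiagmx (fun k : 'I_3 => Dmat b (chk_entry tau k).2).

Definition Wtau (tau : 'I_Gamma_c) : 'M[int]_(Nq q * 4, 3 * Nq q) :=
  stackmx (fun l : 'I_(Nq q) =>
    Pmat *m bdiagmx (fun _ : 'I_3 => (betav l)^T) *m Dtau tau).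

Definition Smat : 'M[int]_(Nsym * 1, Nsym * Nq q) :=
  kronmx (1%:M : 'M[int]_Nsym) (const_mx 1 : 'rV[int]_(Nq q)).

Definition Amat : 'M[int]_(Gamma_c * (Nq q * 4) + Nsym * 1, Nsym * Nq q) :=
  col_mx
    (stackmx (fun tau : 'I_Gamma_c =>
       Wtau tau *m kronmx (Qmat tau) (1%:M : 'M[int]_(Nq q))))
    Smat.

End Code.

(* Every factor in the construction of A has entries in {0, 1, -1}, and every
   right factor of a product (the block-diagonal matrix built from beta_l^T,
   the matrices D(2^q, h), and Q_tau (x) I) has at most one nonzero entry in
   each column: in column j of D(2^q, h) only the row indexing j h can be 1,
   and Q_tau (x) I inherits the property from the distinctness of the three
   symbols of a check.  Each entry of a product X Y with such a Y is then a
   single product of two signs, or 0. *)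

From HB Require Import structures.
From mathcomp Require Import all_boot all_order all_algebra all_field.
From mathcomp Require Import zify.
Import GRing.Theory.
Set Implicit Arguments. Unset Strict Implicit.
Local Open Scope ring_scope.

Local Notation signs := [:: 0; 1; -1].

Lemma blk_off_inj k r (y y' : 'I_(k * r)) :
  blk y = blk y' -> off y = off y' -> y = y'.
Proof.
move=> /(congr1 val) /= e1 /(congr1 val) /= e2; apply/val_inj.
by rewrite /= (divn_eq y r) (divn_eq y' r) e1 e2.
Qed.

Section SignMatrices.
Variable R : pzRingType.

Definition sign_entries m n (M : 'M[R]_(m, n)) : Prop :=
  forall i j, M i j \in signs.

Definition col_sparse m n (M : 'M[R]_(m, n)) : Prop :=
  forall i i' j, M i j != 0 -> M i' j != 0 -> i = i'.

Lemma signs_mul (a c : R) : a \in signs -> c \in signs -> a * c \in signs.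
Proof.
rewrite !inE => /or3P[]/eqP-> /or3P[]/eqP->;
  by rewrite ?(mul0r, mulr0, mul1r, mulr1, mulN1r, opprK, inE, eqxx, orbT).
Qed.

Lemma mulr_neq0l (a c : R) : a * c != 0 -> a != 0.
Proof. by apply: contra_neq => ->; rewrite mul0r. Qed.

Lemma mulr_neq0r (a c : R) : a * c != 0 -> c != 0.
Proof. by apply: contra_neq => ->; rewrite mulr0. Qed.

Lemma sum_mem_single_support (I : finType) (S : {pred R}) (f : I -> R) :
  0 \in S -> (forall x, f x \in S) ->
  (forall x y, f x != 0 -> f y != 0 -> x = y) -> \sum_x f x \in S.
Proof.
move=> S0 Sf f_single; have [x fx_neq0|f0] := pickP (fun x => f x != 0).
  rewrite (bigD1 x) //= big1 ?addr0 // => y yx.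
  by apply/eqP; apply: contraNT yx => fy; rewrite (f_single y x fy fx_neq0).
by rewrite big1 // => y _; apply/eqP/negbFE/f0.
Qed.

Lemma mulmx_sign_entries m n p (X : 'M[R]_(m, n)) (Y : 'M[R]_(n, p)) :
  sign_entries X -> sign_entries Y -> col_sparse Y -> sign_entries (X *m Y).
Proof.
move=> sX sY cY i j; rewrite mxE; apply: sum_mem_single_support.
- by rewrite inE eqxx.
- by move=> k; apply: signs_mul.
- by move=> k k' /mulr_neq0r nzk /mulr_neq0r nzk'; apply: cY nzk nzk'.
Qed.

Lemma col_sparse_row n (M : 'M[R]_(1, n)) : col_sparse M.
Proof. by move=> i i' _ _ _; rewrite [i]ord1 [i']ord1. Qed.

Lemma sign_entries_scalar1 n : sign_entries (1%:M : 'M[R]_n).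
Proof. by move=> i j; rewrite mxE; case: (i =P j); rewrite !inE eqxx ?orbT. Qed.

Lemma col_sparse_scalar1 n : col_sparse (1%:M : 'M[R]_n).
Proof.
move=> i i' j; rewrite !mxE.
by case: (i =P j) => [->|]; case: (i' =P j) => [->|]; rewrite ?eqxx.
Qed.

Lemma sign_entries_const1 m n : sign_entries (const_mx 1 : 'M[R]_(m, n)).
Proof. by move=> i j; rewrite mxE !inE eqxx orbT. Qed.

Lemma col_mx_sign_entries m1 m2 n (A : 'M[R]_(m1, n)) (B : 'M[R]_(m2, n)) :
  sign_entries A -> sign_entries B -> sign_entries (col_mx A B).
Proof.
move=> sA sB i j; rewrite -(splitK i).
by case: (split i) => k /=; rewrite ?col_mxEu ?col_mxEd.
Qed.

Lemma stackmx_sign_entries k r c (X : 'I_k -> 'M[R]_(r, c)) :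
  (forall l, sign_entries (X l)) -> sign_entries (stackmx X).
Proof. by move=> sX i j; rewrite mxE; apply: sX. Qed.

Lemma bdiagmx_sign_entries k a c (X : 'I_k -> 'M[R]_(a, c)) :
  (forall l, sign_entries (X l)) -> sign_entries (bdiagmx X).
Proof.
by move=> sX i j; rewrite mxE; case: ifP => _; [apply: sX | rewrite inE eqxx].
Qed.

Lemma bdiagmx_col_sparse k a c (X : 'I_k -> 'M[R]_(a, c)) :
  (forall l, col_sparse (X l)) -> col_sparse (bdiagmx X).
Proof.
move=> cX i i' j; rewrite !mxE.
case: (blk i =P blk j) => [ij|_]; last by rewrite eqxx.
case: (blk i' =P blk j) => [i'j|_]; last by rewrite eqxx.
rewrite ij i'j => nzi nzi'.
by apply: blk_off_inj; [rewrite ij i'j | apply: cX nzi nzi'].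
Qed.

Lemma kronmx_sign_entries m1 n1 m2 n2 (A : 'M[R]_(m1, n1)) (B : 'M[R]_(m2, n2)) :
  sign_entries A -> sign_entries B -> sign_entries (kronmx A B).
Proof. by move=> sA sB i j; rewrite mxE signs_mul. Qed.

Lemma kronmx_col_sparse m1 n1 m2 n2 (A : 'M[R]_(m1, n1)) (B : 'M[R]_(m2, n2)) :
  col_sparse A -> col_sparse B -> col_sparse (kronmx A B).
Proof.
move=> cA cB i i' j; rewrite !mxE => nzi nzi'.
apply: blk_off_inj.
  exact: cA (mulr_neq0l nzi) (mulr_neq0l nzi').
exact: cB (mulr_neq0r nzi) (mulr_neq0r nzi').
Qed.

End SignMatrices.

Lemma Pmat_sign_entries : sign_entries Pmat.
Proof. by move=> i j; rewrite mxE; case: ifP => _; [|case: ifP]. Qed.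

Lemma betav_sign_entries q (l : 'I_(Nq q)) : sign_entries (betav l)^T.
Proof.
move=> i j; rewrite !mxE.
set x := (_ %% 2)%Z.
have x_ge0 : 0 <= x by rewrite modz_ge0.
have x_lt2 : x < 2 by rewrite ltz_pmod.
by move: x_ge0 x_lt2; case: x => [[|[|x]]|x].
Qed.

Lemma Dmat_sign_entries (F : finFieldType) q (b : 'I_q -> F) (h : F) :
  sign_entries (Dmat b h).
Proof. by move=> i j; rewrite mxE; case: (_ == _). Qed.

Lemma Dmat_col_sparse (F : finFieldType) q (b : 'I_q -> F) (h : F) :
  injective (fel_ord b) -> col_sparse (Dmat b h).
Proof.
move=> fel_inj i i' j; rewrite !mxE.
case: (fel b i.+1 =P _) => // ei _; case: (fel b i'.+1 =P _) => // ei' _.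
have succ_lt (w : 'I_(Nq q)) : (w.+1 < 2 ^ q)%N.
  by move: (ltn_ord w); rewrite ltn_subRL.
have := fel_inj (Ordinal (succ_lt i)) (Ordinal (succ_lt i')).
by move=> /(_ (etrans ei (esym ei'))) /(congr1 val) [] /val_inj.
Qed.

Definition check_syms (F : finFieldType) (c : check3 F) : seq nat :=
  let: ((x1, _), (x2, _), (x3, _)) := c in [:: x1; x2; x3].

Section Checks.
Variables (F : finFieldType) (m n : nat) (H : 'M[F]_(m, n)).
Hypothesis deg_ge3 : forall j, (3 <= deg H j)%N.

Lemma sig_lt j k : (0 < k <= deg H j)%N -> (sig H j k < n)%N.
Proof.
move=> /andP[k_gt0 k_le]; rewrite /sig.
have : nth 0%N [seq val s | s <- supp H j] k.-1 \in [seq val s | s <- supp H j].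
  by apply: mem_nth; rewrite size_map -/(deg H j); lia.
by case/mapP=> x _ ->; apply: ltn_ord.
Qed.

Lemma sig_eq j k k' : (0 < k <= deg H j)%N -> (0 < k' <= deg H j)%N ->
  (sig H j k == sig H j k') = (k == k').
Proof.
move=> hk hk'; rewrite /sig nth_uniq ?size_map -?/(deg H j); try lia.
by rewrite (map_inj_uniq val_inj); apply/filter_uniq/enum_uniq.
Qed.

Lemma sig_gaux_eq j k t :
  (0 < k <= deg H j)%N -> (sig H j k == gaux H j t) = false.
Proof. by move=> /sig_lt; rewrite /gaux; lia. Qed.

Lemma row_checks_uniq j : all (fun c => uniq (check_syms c)) (row_checks H j).
Proof.
have := deg_ge3 j; rewrite /row_checks => d_ge3.
have gaux_sig_eq k t :
    (0 < k <= deg H j)%N -> (gaux H j t == sig H j k) = false.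
  by move=> hk; rewrite eq_sym sig_gaux_eq.
case: eqP => [d3|d_neq3].
  by rewrite /= !inE !sig_eq ?d3.
rewrite /= all_cat /= !inE; apply/and3P; split.
- by rewrite sig_eq ?sig_gaux_eq //=; lia.
- apply/allP=> c /mapP[t]; rewrite mem_iota => ht -> /=.
  rewrite !inE sig_gaux_eq ?gaux_sig_eq /gaux; lia.
- by rewrite sig_eq ?gaux_sig_eq //=; lia.
Qed.

Lemma size_row_checks j : size (row_checks H j) = (deg H j - 2)%N.
Proof.
have := deg_ge3 j; rewrite /row_checks; case: eqP => [->//|d_neq3 d_ge3].
by rewrite /= size_cat size_map size_iota /=; lia.
Qed.

Lemma size_all_checks : size (all_checks H) = Gamma_c H.
Proof.
rewrite size_flatten /shape -map_comp sumnE big_map big_enum /=.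
by apply: eq_bigr => j _; rewrite /= size_row_checks.
Qed.

Lemma chk_uniq (tau : 'I_(Gamma_c H)) : uniq (check_syms (chk tau)).
Proof.
have : chk tau \in all_checks H by apply: mem_nth; rewrite size_all_checks.
case/flattenP=> s /mapP[j _ ->].
exact: (allP (row_checks_uniq j)).
Qed.

Lemma chk_entry_sym (tau : 'I_(Gamma_c H)) (k : 'I_3) :
  (chk_entry tau k).1 = nth 0%N (check_syms (chk tau)) k.
Proof.
rewrite /chk_entry; case: (chk tau) => [[[x1 ?] [x2 ?]] [x3 ?]].
by case: k => [[|[|[|k]]] ?].
Qed.

Lemma Qmat_sign_entries (tau : 'I_(Gamma_c H)) : sign_entries (Qmat tau).
Proof. by move=> k x; rewrite mxE; case: (_ == _). Qed.

Lemma Qmat_col_sparse (tau : 'I_(Gamma_c H)) : col_sparse (Qmat tau).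
Proof.
move=> k k' x; rewrite !mxE.
case: (val x =P _) => // ek _; case: (val x =P _) => // ek' _.
have size3 : size (check_syms (chk tau)) = 3%N.
  by case: (chk tau) => [[[? ?] [? ?]] [? ?]].
apply/val_inj/eqP.
rewrite -(@nth_uniq _ 0%N (check_syms (chk tau))) ?size3 ?chk_uniq ?ltn_ord //.
by rewrite -!chk_entry_sym -ek -ek'.
Qed.

End Checks.

Theorem fact1 (F : finFieldType) (q : nat) (b : 'I_q -> F)
  (m n : nat) (H : 'M[F]_(m, n)) :
  (1 <= q)%N ->
  bijective (fel_ord b) ->
  (forall j : 'I_m, (3 <= deg H j)%N) ->
  forall i j, Amat H b i j \in [:: 0; 1; -1].
Proof.
move=> _ fel_bij deg_ge3.
have sW tau : sign_entries (Wtau (H := H) b tau).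
  apply: stackmx_sign_entries => l.
  apply: mulmx_sign_entries.
  - apply: mulmx_sign_entries; first exact: Pmat_sign_entries.
      by apply: bdiagmx_sign_entries => _; apply: betav_sign_entries.
    by apply: bdiagmx_col_sparse => _; apply: col_sparse_row.
  - by apply: bdiagmx_sign_entries => k; apply: Dmat_sign_entries.
  - by apply: bdiagmx_col_sparse => k; apply/Dmat_col_sparse/bij_inj.
apply: col_mx_sign_entries.
  apply: stackmx_sign_entries => tau; apply: mulmx_sign_entries => //.
    apply: kronmx_sign_entries; first exact: Qmat_sign_entries.
    exact: sign_entries_scalar1.
  apply: kronmx_col_sparse; first exact: Qmat_col_sparse.
  exact: col_sparse_scalar1.
rewrite /Smat; apply: kronmx_sign_entries; first exact: sign_entries_scalar1.
exact: sign_entries_const1.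
Qed.
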